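(* Let $f=\frac1n\sum_{z=1}^nf_z$ where each $\nabla f_z$ is $L$-Lipschitz and $\|\nabla f_z(x)\|\le l$ for all $x$ and $z$. Consider one SCSG epoch (see context) from $\tilde x^{k-1}$ producing $\tilde x^k$, with $b\ge1$, $n\ge 8b$, and $\eta L=\gamma(b/n)^{2/3}$, $\gamma\le\frac13$. Then the increase of function value caused by disturbance satisfies $$\mathbb{E}[f(\tilde x^k)-f(\tilde x^{k-1})]\le\frac{5l^2\gamma^2}{L}\left(\frac bn\right)^{1/3}.$$
   Context: One SCSG epoch from $\tilde x^{k-1}$: $\tilde\mu=\nabla f(\tilde x^{k-1})$, $x_0=\tilde x^{k-1}$, $N\sim\mathrm{Geom}(n/(n+b))$ ($P(N=j)=\frac b{n+b}(\frac n{n+b})^j$, so $\mathbb{E}N=n/b$), for $t=1..N$: $x_t=x_{t-1}-\eta(\nabla f_{I_t}(x_{t-1})-\nabla f_{I_t}(\tilde x^{k-1})+\tilde\mu)$ with $I_t\subset[n]$ uniform of size $b$, $\nabla f_I=\frac1{|I|}\sum_{i\in I}\nabla f_i$; $\tilde x^k=x_N$. *)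

From HB Require Import structures.
From mathcomp Require Import all_boot all_order all_algebra.
From mathcomp Require Import all_classical all_reals all_analysis.
Set Implicit Arguments. Unset Strict Implicit. Unset Printing Implicit Defensive.
Import Order.TTheory GRing.Theory Num.Theory.
Import numFieldNormedType.Exports.
Local Open Scope ring_scope.

Definition dotv (R : realType) (d : nat) (u v : 'rV[R]_d) : R :=
  \sum_(i < d) u 0 i * v 0 i.
Definition enorm (R : realType) (d : nat) (v : 'rV[R]_d) : R :=
  Num.sqrt (dotv v v).

Definition is_gradient (R : realType) (d : nat)
    (h : 'rV[R]_d -> R) (g : 'rV[R]_d -> 'rV[R]_d) : Prop :=
  forall x, differentiable h x /\ ('d h x : 'rV[R]_d -> R) = (fun v => dotv (g x) v).

Definition favg (R : realType) (d n : nat) (F : 'I_n -> 'rV[R]_d -> R) x : R :=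
  n%:R^-1 * \sum_(z < n) F z x.

Definition grad_batch (R : realType) (d n : nat) (G : 'I_n -> 'rV[R]_d -> 'rV[R]_d)
    (I : {set 'I_n}) x : 'rV[R]_d :=
  #|I|%:R^-1 *: \sum_(i in I) G i x.

Definition grad_full (R : realType) (d n : nat) (G : 'I_n -> 'rV[R]_d -> 'rV[R]_d) x
  : 'rV[R]_d := n%:R^-1 *: \sum_(z < n) G z x.

(* inner iterates x_t of one SCSG epoch started at x0 = tilde x^{k-1},
   minibatch I_{t+1} = S t *)
Fixpoint scsg_iter (R : realType) (d n : nat) (G : 'I_n -> 'rV[R]_d -> 'rV[R]_d)
    (eta : R) (x0 : 'rV[R]_d) (S : nat -> {set 'I_n}) (t : nat) : 'rV[R]_d :=
  match t with
  | 0 => x0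
  | t'.+1 =>
      let x := scsg_iter G eta x0 S t' in
      x - eta *: (grad_batch G (S t') x - grad_batch G (S t') x0 + grad_full G x0)
  end.

Definition batches (n b j : nat) : {set {ffun 'I_j -> {set 'I_n}}} :=
  [set S : {ffun 'I_j -> {set 'I_n}} | [forall t : 'I_j, #|S t| == b]].

Definition seq_of_ffun (n j : nat) (S : {ffun 'I_j -> {set 'I_n}}) : nat -> {set 'I_n} :=
  fun t => match (insub t : option 'I_j) with Some i => S i | None => finset.set0 end.

(* E[ f(x_j) - f(x_0) ] when the j minibatches are i.i.d. uniform b-subsets *)
Definition cond_exp_step (R : realType) (d n b : nat) (F : 'I_n -> 'rV[R]_d -> R)
    (G : 'I_n -> 'rV[R]_d -> 'rV[R]_d) (eta : R) (x0 : 'rV[R]_d) (j : nat) : R :=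
  #|batches n b j|%:R^-1 *
  \sum_(S in batches n b j)
     (favg F (scsg_iter G eta x0 (seq_of_ffun S) j) - favg F x0).

(* P(N = j) for N ~ Geom(n/(n+b)) *)
Definition geomP (R : realType) (n b j : nat) : R :=
  (b%:R / (n + b)%:R) * (n%:R / (n + b)%:R) ^+ j.

(* term j of the series E[f(tilde x^k) - f(tilde x^{k-1})] = sum_j P(N=j) E[..|N=j] *)
Definition scsg_term (R : realType) (d n b : nat) (F : 'I_n -> 'rV[R]_d -> R)
    (G : 'I_n -> 'rV[R]_d -> 'rV[R]_d) (eta : R) (x0 : 'rV[R]_d) (j : nat) : R :=
  geomP R n b j * cond_exp_step b F G eta x0 j.

From HB Require Import structures.
From mathcomp Require Import all_boot all_order all_algebra.
From mathcomp Require Import all_classical all_reals all_analysis.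
From mathcomp Require Import perm ring lra.
Import Order.TTheory GRing.Theory Num.Theory.
Import numFieldNormedType.Exports.
Local Open Scope ring_scope.
Set Implicit Arguments. Unset Strict Implicit. Unset Printing Implicit Defensive.

(* The direction v = grad f_I(x) - grad f_I(x0) + grad f(x0) of an inner step
   is an unbiased estimate of grad f(x) of norm at most 3 l.  The descent
   lemma therefore gives, averaged over the minibatch,
     E f(x - eta v) - f(x) <= - eta |grad f(x)|^2 + L/2 (3 eta l)^2
                           <= L/2 (3 eta l)^2,
   so j inner steps increase f by at most j L/2 (3 eta l)^2 in expectation
   (and decrease it by at most 3 j eta l^2, which gives summability).
   Averaging over N with E N = n/b and substituting
   eta = gamma (b/n)^(2/3) / L gives the bound with constant 9/2. *)

Section EuclideanSpace.
Variables (R : realType) (d : nat).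
Implicit Types u v w : 'rV[R]_d.

Lemma dotvC u v : dotv u v = dotv v u.
Proof. by apply: eq_bigr => i _; rewrite mulrC. Qed.

Fact dotv_is_linear u : linear_for *%R (dotv u).
Proof.
move=> a v w; rewrite /dotv mulr_sumr -big_split /=.
by apply: eq_bigr => i _; rewrite !mxE mulrDr mulrCA.
Qed.

HB.instance Definition _ u :=
  GRing.isLinear.Build R 'rV[R]_d R *%R (dotv u) (dotv_is_linear u).

Lemma dotvDl u v w : dotv (u + v) w = dotv u w + dotv v w.
Proof. by rewrite dotvC linearD /= !(dotvC w). Qed.

Lemma dotvBl u v w : dotv (u - v) w = dotv u w - dotv v w.
Proof. by rewrite dotvC linearB /= !(dotvC w). Qed.

Lemma dotvZl a u v : dotv (a *: u) v = a * dotv u v.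
Proof. by rewrite dotvC linearZ /= dotvC. Qed.

Lemma dotv_suml (I : finType) (P : pred I) (f : I -> 'rV[R]_d) v :
  dotv (\sum_(i | P i) f i) v = \sum_(i | P i) dotv (f i) v.
Proof. by rewrite dotvC linear_sum; apply: eq_bigr => i _; rewrite dotvC. Qed.

Lemma dotv_ge0 u : 0 <= dotv u u.
Proof. by apply: sumr_ge0 => i _; rewrite -expr2 sqr_ge0. Qed.

Lemma dotv_Lagrange u v :
  dotv u u * dotv v v - dotv u v ^+ 2 =
  2^-1 * \sum_(i < d) \sum_(j < d) (u 0 i * v 0 j - u 0 j * v 0 i) ^+ 2.
Proof.
have double_sum (a c : 'I_d -> R) : (\sum_i a i) * (\sum_j c j) = \sum_i \sum_j a i * c j.
  by rewrite mulr_suml; apply: eq_bigr => i _; rewrite mulr_sumr.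
rewrite /dotv expr2 !double_sum.
rewrite [X in _ = _ * X](_ : _ = \sum_i \sum_j (u 0 i * u 0 i * (v 0 j * v 0 j))
   + \sum_i \sum_j (u 0 j * u 0 j * (v 0 i * v 0 i))
   - 2 * \sum_i \sum_j (u 0 i * v 0 i * (u 0 j * v 0 j))); last first.
  rewrite mulr_sumr -!big_split -sumrN -big_split /=; apply: eq_bigr => i _.
  rewrite mulr_sumr -!big_split -sumrN -big_split /=; apply: eq_bigr => j _.
  ring.
rewrite (exchange_big _ _ _ _ _ (fun i j => u 0 j * u 0 j * (v 0 i * v 0 i))) /=.
by field.
Qed.

Lemma dotv_CauchySchwarz u v : dotv u v ^+ 2 <= dotv u u * dotv v v.
Proof.
rewrite -subr_ge0 dotv_Lagrange mulr_ge0 ?invr_ge0 ?ler0n //.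
by do 2![apply: sumr_ge0 => ? _]; apply: sqr_ge0.
Qed.

Lemma enorm_ge0 u : 0 <= enorm u.
Proof. exact: sqrtr_ge0. Qed.

Lemma enorm_sqr u : enorm u ^+ 2 = dotv u u.
Proof. by rewrite sqr_sqrtr // dotv_ge0. Qed.

Lemma norm_dotv_le u v : `|dotv u v| <= enorm u * enorm v.
Proof.
rewrite -sqrtr_sqr -sqrtrM ?dotv_ge0 //.
by rewrite ler_sqrt ?mulr_ge0 ?dotv_ge0 // dotv_CauchySchwarz.
Qed.

Lemma dotv_le u v : dotv u v <= enorm u * enorm v.
Proof. exact: le_trans (ler_norm _) (norm_dotv_le u v). Qed.

Lemma enormD u v : enorm (u + v) <= enorm u + enorm v.
Proof.
rewrite -(ger0_norm (addr_ge0 (enorm_ge0 u) (enorm_ge0 v))) -sqrtr_sqr.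
rewrite ler_sqrt ?sqr_ge0 // sqrrD !enorm_sqr dotvDl !linearD /= (dotvC v u).
by have := dotv_le u v; lra.
Qed.

Lemma enormZ a u : enorm (a *: u) = `|a| * enorm u.
Proof.
by rewrite /enorm dotvZl linearZ /= mulrA -expr2 sqrtrM ?sqr_ge0 // sqrtr_sqr.
Qed.

Lemma enormN u : enorm (- u) = enorm u.
Proof. by rewrite -scaleN1r enormZ normrN normr1 mul1r. Qed.

Lemma enormB u v : enorm (u - v) <= enorm u + enorm v.
Proof. by rewrite -(enormN v) enormD. Qed.

Lemma enorm_sum (I : finType) (P : pred I) (f : I -> 'rV[R]_d) :
  enorm (\sum_(i | P i) f i) <= \sum_(i | P i) enorm (f i).
Proof.
elim/big_ind2 : _ => [|x1 x2 y1 y2 h1 h2|//].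
  by rewrite -(scale0r 0) enormZ normr0 mul0r.
exact: le_trans (enormD _ _) (lerD h1 h2).
Qed.

Lemma enorm_avg_le (I : finType) (A : {pred I}) (f : I -> 'rV[R]_d) c :
  (0 < #|A|)%N -> (forall i, i \in A -> enorm (f i) <= c) ->
  enorm (#|A|%:R^-1 *: \sum_(i in A) f i) <= c.
Proof.
move=> A0 fc; have A0' : (#|A|%:R : R) != 0 by rewrite pnatr_eq0 -lt0n.
rewrite enormZ ger0_norm ?invr_ge0 ?ler0n // ler_pdivrMl ?ltr0n //.
apply: le_trans (enorm_sum _ _) _; rewrite -sum1_card natr_sum mulr_suml.
by apply: ler_sum => i /fc; rewrite mul1r.
Qed.

End EuclideanSpace.

Section GradientCalculus.
Variables (R : realType) (d : nat) (f : 'rV[R]_d -> R) (g : 'rV[R]_d -> 'rV[R]_d).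
Hypothesis f_grad : is_gradient f g.
Local Open Scope classical_set_scope.

Lemma is_derive_line (x v : 'rV[R]_d) (s : R) :
  is_derive s 1 (fun t : R => f (x + t *: v)) (dotv (g (x + s *: v)) v).
Proof.
have [df dfE] := f_grad (x + s *: v).
have shiftE : (fun k : R => k^-1 *: (f (x + (k *: 1 + s) *: v) - f (x + s *: v))) =
              (fun k : R => k^-1 *: (f (k *: v + (x + s *: v)) - f (x + s *: v))).
  by apply: funext => k; rewrite [k *: 1]mulr1 scalerDl addrCA addrC.
split; first by rewrite /derivable /= shiftE; exact: diff_derivable.
by rewrite /derive /= shiftE -/(derive f _ v) deriveE // dfE.
Qed.

Lemma gradient_bounded_lipschitz l :
  (forall y, enorm (g y) <= l) -> forall x v, `|f (x + v) - f x| <= l * enorm v.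
Proof.
move=> gl x v.
have line_cont : {within `[0, 1], continuous (fun t : R => f (x + t *: v))}.
  apply: derivable_within_continuous => t _.
  exact: @ex_derive _ _ _ _ _ _ _ (is_derive_line x v t).
have [c _] := MVT ltr01 (fun t _ => is_derive_line x v t) line_cont.
rewrite scale1r scale0r addr0 subr0 mulr1 => ->.
apply: le_trans (norm_dotv_le _ _) _.
by rewrite ler_wpM2r ?enorm_ge0.
Qed.

(* Apply the mean value theorem to [t |-> f (x + t v) - t <g x, v> - t^2 L |v|^2 / 2]. *)
Lemma descent_lemma L :
  (forall y z, enorm (g y - g z) <= L * enorm (y - z)) ->
  forall x v, f (x + v) - f x - dotv (g x) v <= L / 2 * enorm v ^+ 2.
Proof.
move=> gL x v; set c := dotv (g x) v; set K := L / 2 * enorm v ^+ 2.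
pose psi := (fun t : R => f (x + t *: v)) - c \*: id - K \*: (id * id).
have psi' t : is_derive t (1 : R) psi
    (dotv (g (x + t *: v)) v - c *: (1 : R) - K *: (t *: (1 : R) + t *: 1)).
  by apply: is_deriveB; first apply: is_deriveB; first exact: is_derive_line.
have psi_cont : {within `[0, 1], continuous psi}.
  by apply: derivable_within_continuous => t _; exact: @ex_derive _ _ _ _ _ _ _ (psi' t).
have [t /andP[t0 _]] := MVT ltr01 (fun t _ => psi' t) psi_cont.
have psiE s : psi s = f (x + s *: v) - c * s - K * (s * s) by [].
rewrite !psiE scale1r scale0r addr0 [c%:A]mulr1 [t%:A]mulr1.
have slope : dotv (g (x + t *: v)) v - c <= L * t * enorm v ^+ 2.
  rewrite /c -dotvBl; apply: le_trans (dotv_le _ _) _.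
  have := gL (x + t *: v) x; rewrite addrAC subrr add0r enormZ (ger0_norm (ltW t0)) => gt.
  by apply: le_trans (ler_wpM2r (enorm_ge0 v) gt) _; rewrite expr2 !mulrA.
have -> : K *: (t + t) = L * t * enorm v ^+ 2 by rewrite /K /GRing.scale /=; field.
lra.
Qed.

End GradientCalculus.

Section UniformSubsets.
Variables (T : finType) (k : nat).
Local Notation subsets := [set I : {set T} | #|I| == k].

Definition card_subsets_mem (i : T) := #|[set I in subsets | i \in I]|.

Lemma card_subsets_mem_le i j : (card_subsets_mem i <= card_subsets_mem j)%N.
Proof.
pose s := tperm i j.
rewrite /card_subsets_mem -(card_imset _ (imset_inj (@perm_inj _ s))).
apply/subset_leq_card/fintype.subsetP => _ /imsetP[I + ->]; rewrite !inE => /andP[/eqP <- iI].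
rewrite card_imset ?eqxx /=; last exact: perm_inj.
by apply/imsetP; exists i; rewrite ?tpermL.
Qed.

Lemma card_subsets_mem_const i j : card_subsets_mem i = card_subsets_mem j.
Proof. by apply/eqP; rewrite eqn_leq !card_subsets_mem_le. Qed.

Lemma sum_subsets_exchange (V : nmodType) (w : T -> V) :
  \sum_(I in subsets) \sum_(i in I) w i = \sum_i w i *+ card_subsets_mem i.
Proof.
rewrite (exchange_big_dep predT) //=; apply: eq_bigr => i _.
by rewrite -sumr_const; apply: eq_bigl => I; rewrite !inE.
Qed.

Lemma sum_card_subsets_mem : (\sum_i card_subsets_mem i = #|subsets| * k)%N.
Proof.
transitivity (\sum_i 1%N *+ card_subsets_mem i)%N.
  by apply: eq_bigr => i _; rewrite natn.
rewrite -sum_subsets_exchange -sum_nat_const.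
by apply: eq_bigr => I; rewrite inE sum1_card => /eqP.
Qed.

(* By symmetry every element lies in the same number of k-subsets. *)
Lemma sum_subsets_mulrn (V : nmodType) (w : T -> V) :
  (\sum_(I in subsets) \sum_(i in I) w i) *+ #|T| =
  (\sum_i w i) *+ (#|subsets| * k).
Proof.
rewrite sum_subsets_exchange -!sumrMnl; apply: eq_bigr => i _.
rewrite -mulrnA -sum_card_subsets_mem (eq_bigr (fun=> card_subsets_mem i)).
  by rewrite sum_nat_const mulnC.
by move=> j _; apply: card_subsets_mem_const.
Qed.

End UniformSubsets.

Section BatchSequences.
Variables (X : finType) (j : nat).

Definition ffun_rcons (S : {ffun 'I_j -> X}) (x : X) : {ffun 'I_j.+1 -> X} :=
  [ffun t => if insub (val t) : option 'I_j is Some t' then S t' else x].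

Definition ffun_unrcons (S : {ffun 'I_j.+1 -> X}) : {ffun 'I_j -> X} * X :=
  ([ffun t => S (widen_ord (leqnSn j) t)], S ord_max).

Lemma ffun_rconsK : cancel (fun p => ffun_rcons p.1 p.2) ffun_unrcons.
Proof.
move=> [S x]; congr pair; last by rewrite ffunE insubF // ltnn.
by apply/ffunP => t; rewrite !ffunE valK.
Qed.

Lemma ffun_unrconsK : cancel ffun_unrcons (fun p => ffun_rcons p.1 p.2).
Proof.
move=> S; apply/ffunP => t; rewrite !ffunE; case: insubP => [t' _ tt'|] /=.
  by rewrite ffunE; congr (S _); apply: val_inj.
rewrite -leqNgt => tj; congr (S _); apply/val_inj/eqP.
by rewrite /= eqn_leq tj -ltnS ltn_ord.
Qed.

Lemma ffun_rcons_forall (P : pred X) S x :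
  [forall t, P (ffun_rcons S x t)] = [forall t, P (S t)] && P x.
Proof.
apply/forallP/andP => [Pt|[/forallP PS Px] t]; last first.
  by rewrite ffunE; case: insubP.
split; last by have := Pt ord_max; rewrite ffunE insubF // ltnn.
by apply/forallP => t; have := Pt (widen_ord (leqnSn j) t); rewrite ffunE valK.
Qed.

End BatchSequences.

Lemma seq_of_ffun_rcons_lt n j (S : {ffun 'I_j -> {set 'I_n}}) I t :
  (t < j)%N -> seq_of_ffun (ffun_rcons S I) t = seq_of_ffun S t.
Proof.
move=> tj; rewrite /seq_of_ffun; case: insubP => [u _ ut|]; last by rewrite ltnW.
by rewrite ffunE ut; case: insubP => //; rewrite tj.
Qed.

Lemma seq_of_ffun_rcons_last n j (S : {ffun 'I_j -> {set 'I_n}}) I :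
  seq_of_ffun (ffun_rcons S I) j = I.
Proof.
rewrite /seq_of_ffun; case: insubP => [u _ uj|]; last by rewrite ltnSn.
by rewrite ffunE uj insubF // ltnn.
Qed.

Section Batches.
Variables (n b : nat).
Local Notation B := [set I : {set 'I_n} | #|I| == b].

Lemma sum_batchesS (V : nmodType) j (h : {ffun 'I_j.+1 -> {set 'I_n}} -> V) :
  \sum_(S in batches n b j.+1) h S =
  \sum_(S in batches n b j) \sum_(I in B) h (ffun_rcons S I).
Proof.
rewrite (reindex (fun p => ffun_rcons p.1 p.2)) /=; last first.
  by apply: onW_bij; exists (@ffun_unrcons _ j); [exact: ffun_rconsK | exact: ffun_unrconsK].
rewrite pair_big_dep; apply: eq_bigl => -[S I].
by rewrite !inE /= (ffun_rcons_forall (fun I : {set 'I_n} => #|I| == b)).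
Qed.

Lemma card_batchesS j : #|batches n b j.+1| = (#|batches n b j| * #|B|)%N.
Proof.
rewrite -[LHS]sum1_card sum_batchesS -sum_nat_const.
by apply: eq_bigr => S _; rewrite sum1_card.
Qed.

Lemma batches_gt0 j : (b <= n)%N -> (0 < #|batches n b j|)%N.
Proof.
move=> bn; have /card_gt0P[I0 I0B] : (0 < #|B|)%N by rewrite card_draws card_ord bin_gt0.
apply/card_gt0P; exists [ffun=> I0].
by rewrite inE; apply/forallP => t; rewrite ffunE; rewrite inE in I0B.
Qed.

End Batches.

Definition vr_grad (R : realType) (d n : nat) (G : 'I_n -> 'rV[R]_d -> 'rV[R]_d)
    (x0 : 'rV[R]_d) (I : {set 'I_n}) (x : 'rV[R]_d) : 'rV[R]_d :=
  grad_batch G I x - grad_batch G I x0 + grad_full G x0.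

Section Iterates.
Variables (R : realType) (d n b : nat) (G : 'I_n -> 'rV[R]_d -> 'rV[R]_d).
Variables (eta : R) (x0 : 'rV[R]_d).
Local Notation B := [set I : {set 'I_n} | #|I| == b].
Local Notation iterate S j := (scsg_iter G eta x0 (seq_of_ffun S) j).

Lemma scsg_iter_ext s s' k :
  (forall t, (t < k)%N -> s t = s' t) -> scsg_iter G eta x0 s k = scsg_iter G eta x0 s' k.
Proof.
elim: k => [//|k IH] ss' /=.
by rewrite IH ?ss' // => t tk; apply/ss'/ltnW.
Qed.

Lemma scsg_iter_rcons j (S : {ffun 'I_j -> {set 'I_n}}) I :
  iterate (ffun_rcons S I) j.+1 = iterate S j - eta *: vr_grad G x0 I (iterate S j).
Proof.
rewrite /= seq_of_ffun_rcons_last (@scsg_iter_ext _ (seq_of_ffun S)) //.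
exact: seq_of_ffun_rcons_lt.
Qed.

Lemma sum_batches_drift (phi : 'rV[R]_d -> R) (c : R) :
  (forall x, \sum_(I in B) (phi (x - eta *: vr_grad G x0 I x) - phi x) <= #|B|%:R * c) ->
  forall j, \sum_(S in batches n b j) (phi (iterate S j) - phi x0) <=
            #|batches n b j|%:R * (j%:R * c).
Proof.
move=> drift; elim=> [|j IH]; first by rewrite mul0r mulr0 big1 // => S _; rewrite subrr.
have splitS (S : {ffun 'I_j -> {set 'I_n}}) : \sum_(I in B) (phi (iterate (ffun_rcons S I) j.+1) - phi x0) =
    \sum_(I in B) (phi (iterate S j - eta *: vr_grad G x0 I (iterate S j)) - phi (iterate S j))
    + #|B|%:R * (phi (iterate S j) - phi x0).
  rewrite mulr_natl -sumr_const -big_split.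
  by apply: eq_bigr => I _; rewrite scsg_iter_rcons /= addrA subrK.
rewrite sum_batchesS (eq_bigr _ (fun S _ => splitS S)) big_split /= -mulr_sumr.
rewrite card_batchesS natrM -natr1.
have driftS : \sum_(S in batches n b j)
    \sum_(I in B) (phi (iterate S j - eta *: vr_grad G x0 I (iterate S j)) - phi (iterate S j))
    <= #|batches n b j|%:R * (#|B|%:R * c).
  by rewrite mulr_natl -sumr_const; apply: ler_sum => S _; apply: drift.
have B0 : (0 : R) <= #|B|%:R := ler0n _ _.
have := lerD driftS (ler_wpM2l B0 IH).
by congr (_ <= _); ring.
Qed.

Hypothesis bn : (b <= n)%N.
Variable F : 'I_n -> 'rV[R]_d -> R.

Lemma cond_exp_step_le (c : R) :
  (forall x, \sum_(I in B) (favg F (x - eta *: vr_grad G x0 I x) - favg F x)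
               <= #|B|%:R * c) ->
  forall j, cond_exp_step b F G eta x0 j <= j%:R * c.
Proof.
move=> drift j; rewrite ler_pdivrMl ?ltr0n ?batches_gt0 //.
exact: sum_batches_drift.
Qed.

Lemma cond_exp_step_ge (c : R) :
  (forall x, \sum_(I in B) (favg F x - favg F (x - eta *: vr_grad G x0 I x))
               <= #|B|%:R * c) ->
  forall j, - (j%:R * c) <= cond_exp_step b F G eta x0 j.
Proof.
move=> drift j; rewrite ler_pdivlMl ?ltr0n ?batches_gt0 // mulrN lerNl -sumrN.
rewrite (eq_bigr (fun S => - favg F (iterate S j) - - favg F x0)) => [|S _]; last first.
  by rewrite /=; ring.
apply: (sum_batches_drift (phi := fun x => - favg F x)) => x.
by rewrite (eq_bigr _ (fun I _ => addrC _ _)) opprK.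
Qed.

End Iterates.

Lemma avg_le (R : numFieldType) (n : nat) (a : 'I_n -> R) (c : R) :
  (0 < n)%N -> (forall z, a z <= c) -> n%:R^-1 * \sum_z a z <= c.
Proof.
move=> n0 ac; rewrite ler_pdivrMl ?ltr0n //.
by apply: le_trans (ler_sum _ (fun z _ => ac z)) _; rewrite sumr_const card_ord mulr_natl.
Qed.

Section OneStep.
Variables (R : realType) (d n b : nat).
Variables (F : 'I_n -> 'rV[R]_d -> R) (G : 'I_n -> 'rV[R]_d -> 'rV[R]_d).
Variables (L l eta : R) (x0 : 'rV[R]_d).
Hypothesis F_grad : forall z, is_gradient (F z) (G z).
Hypothesis L_ge0 : 0 <= L.
Hypothesis G_lip : forall z x y, enorm (G z x - G z y) <= L * enorm (x - y).
Hypothesis G_bound : forall z x, enorm (G z x) <= l.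
Hypothesis b_gt0 : (0 < b)%N.
Hypothesis bn : (b <= n)%N.
Hypothesis eta_ge0 : 0 <= eta.
Local Notation B := [set I : {set 'I_n} | #|I| == b].

Let n_gt0 : (0 < n)%N. Proof. exact: leq_trans b_gt0 bn. Qed.

Let l_ge0 : 0 <= l.
Proof. exact: le_trans (enorm_ge0 _) (G_bound (Ordinal n_gt0) 0). Qed.

Lemma favg_descent x v :
  favg F (x + v) - favg F x - dotv (grad_full G x) v <= L / 2 * enorm v ^+ 2.
Proof.
rewrite /favg /grad_full dotvZl dotv_suml -!mulrBr -!sumrB.
by apply: avg_le => // z; apply: descent_lemma.
Qed.

Lemma favg_decrease_le x v : favg F x - favg F (x + v) <= l * enorm v.
Proof.
rewrite /favg -mulrBr -sumrB; apply: avg_le => // z.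
apply: le_trans (gradient_bounded_lipschitz (F_grad z) (G_bound z) x v).
by rewrite distrC ler_norm.
Qed.

Lemma enorm_grad_batch_le I x : I \in B -> enorm (grad_batch G I x) <= l.
Proof. by rewrite inE => /eqP Ib; apply: enorm_avg_le => [|i _]; rewrite ?Ib. Qed.

Lemma enorm_grad_full_le x : enorm (grad_full G x) <= l.
Proof.
have -> : grad_full G x = grad_batch G [set: 'I_n] x.
  by rewrite /grad_batch cardsT card_ord; congr (_ *: _); apply: eq_bigl => z; rewrite inE.
by apply: enorm_avg_le => [|i _]; rewrite ?cardsT ?card_ord.
Qed.

Lemma enorm_vr_grad_le I x : I \in B -> enorm (vr_grad G x0 I x) <= 3 * l.
Proof.
move=> IB; apply: le_trans (enormD _ _) _.
have := enormB (grad_batch G I x) (grad_batch G I x0).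
have := enorm_grad_batch_le x IB; have := enorm_grad_batch_le x0 IB.
have := enorm_grad_full_le x0; lra.
Qed.

Lemma sum_grad_batch x : \sum_(I in B) grad_batch G I x = #|B|%:R *: grad_full G x.
Proof.
have bR : (b%:R : R) != 0 by rewrite pnatr_eq0 -lt0n.
have nR : (n%:R : R) != 0 by rewrite pnatr_eq0 -lt0n.
have -> : \sum_(I in B) grad_batch G I x = b%:R^-1 *: \sum_(I in B) \sum_(i in I) G i x.
  by rewrite scaler_sumr; apply: eq_bigr => I; rewrite inE /grad_batch => /eqP ->.
have := sum_subsets_mulrn b (fun i => G i x); rewrite card_ord => subsetsE.
apply: (scalerI nR); rewrite [LHS]scalerA (mulrC n%:R) -scalerA (scaler_nat n) subsetsE -(scaler_nat (_ * b)).
by rewrite /grad_full !scalerA natrM mulrCA mulVf // mulr1 (mulrC n%:R) mulfK.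
Qed.

Lemma sum_vr_grad x : \sum_(I in B) vr_grad G x0 I x = #|B|%:R *: grad_full G x.
Proof.
by rewrite big_split sumrB /= !sum_grad_batch sumr_const !scaler_nat subrK.
Qed.

Lemma step_descent x I : I \in B ->
  favg F (x - eta *: vr_grad G x0 I x) - favg F x <=
  - (eta * dotv (grad_full G x) (vr_grad G x0 I x)) + L / 2 * (3 * eta * l) ^+ 2.
Proof.
move=> IB; have := favg_descent x (- (eta *: vr_grad G x0 I x)).
rewrite linearN /= [dotv _ (_ *: _)]linearZ /= enormN enormZ (ger0_norm eta_ge0).
have : L / 2 * (eta * enorm (vr_grad G x0 I x)) ^+ 2 <= L / 2 * (3 * eta * l) ^+ 2.
  rewrite ler_wpM2l ?divr_ge0 // ler_sqr ?nnegrE ?mulr_ge0 ?enorm_ge0 //.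
  have -> : 3 * eta * l = eta * (3 * l) by ring.
  by rewrite ler_wpM2l // enorm_vr_grad_le.
lra.
Qed.

Lemma step_ascent x I : I \in B ->
  favg F x - favg F (x - eta *: vr_grad G x0 I x) <= 3 * eta * l ^+ 2.
Proof.
move=> IB; apply: le_trans (favg_decrease_le _ _) _.
rewrite enormN enormZ (ger0_norm eta_ge0).
have -> : 3 * eta * l ^+ 2 = l * (eta * (3 * l)) by ring.
by rewrite ler_wpM2l // ler_wpM2l // enorm_vr_grad_le.
Qed.

Lemma step_drift_le x :
  \sum_(I in B) (favg F (x - eta *: vr_grad G x0 I x) - favg F x) <=
  #|B|%:R * (L / 2 * (3 * eta * l) ^+ 2).
Proof.
apply: le_trans (ler_sum _ (fun I IB => step_descent x IB)) _.
rewrite big_split /= sumrN -mulr_sumr -linear_sum /= sum_vr_grad.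
rewrite [dotv _ (_ *: _)]linearZ /= sumr_const -mulr_natl.
have : 0 <= eta * (#|B|%:R * dotv (grad_full G x) (grad_full G x)).
  by rewrite mulr_ge0 // mulr_ge0 ?dotv_ge0.
lra.
Qed.

Lemma step_drift_ge x :
  \sum_(I in B) (favg F x - favg F (x - eta *: vr_grad G x0 I x)) <=
  #|B|%:R * (3 * eta * l ^+ 2).
Proof.
rewrite mulr_natl -sumr_const.
exact: ler_sum (fun I IB => step_ascent x IB).
Qed.

End OneStep.

Lemma geometric_moment_partial (R : realFieldType) (p q : R) m :
  p + q = 1 -> 0 < p ->
  \sum_(0 <= j < m) p * q ^+ j * j%:R + (m%:R + q / p) * q ^+ m = q / p.
Proof.
move=> pq p_gt0; have pE : p = 1 - q by rewrite -pq addrK.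
have q1 : 1 - q != 0 by rewrite -pE gt_eqF.
elim: m => [|m IH]; first by rewrite big_geq // !add0r expr0 mulr1.
rewrite big_nat_recr //= -addrA -[RHS]IH; congr (_ + _).
by rewrite -natr1 exprS pE; field.
Qed.

(* The series is [E a(N)] for [P(N = j) = p q^j], and the bound is [c E N]. *)
Lemma geometric_series_le (R : realType) (p q c c' : R) (a : nat -> R) :
  p + q = 1 -> 0 < p -> 0 <= q -> 0 <= c -> 0 <= c' ->
  (forall j, - (j%:R * c') <= a j) -> (forall j, a j <= j%:R * c) ->
  cvgn (series (fun j => p * q ^+ j * a j)) /\
  limn (series (fun j => p * q ^+ j * a j)) <= q / p * c.
Proof.
move=> pq p_gt0 q_ge0 c_ge0 c'_ge0 a_ge a_le.
have w_ge0 j : 0 <= p * q ^+ j by rewrite mulr_ge0 ?exprn_ge0 // ltW.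
have moment m : \sum_(0 <= j < m) p * q ^+ j * j%:R <= q / p.
  rewrite -[leRHS](geometric_moment_partial m pq p_gt0) lerDl.
  by rewrite mulr_ge0 ?exprn_ge0 // addr_ge0 // divr_ge0 // ltW.
have weighted_le (e : nat -> R) (C : R) : 0 <= C ->
    (forall j, e j <= j%:R * C) ->
    forall m, \sum_(0 <= j < m) p * q ^+ j * e j <= q / p * C.
  move=> C_ge0 eC m; apply: le_trans (_ : _ <= \sum_(0 <= j < m) p * q ^+ j * j%:R * C) _.
    by apply: ler_sum => j _; rewrite -[leRHS]mulrA ler_wpM2l.
  by rewrite -mulr_suml ler_wpM2r.
have u_cvg : cvgn (series (fun j => p * q ^+ j * a j)).
  apply: normed_cvg; apply: nondecreasing_is_cvgn.
    by apply: nondecreasing_series => j _ _; exact: normr_ge0.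
  exists (q / p * (c + c')) => _ [m _ <-].
  apply: le_trans (weighted_le (fun j => `|a j|) _ _ _ m) => [||j].
  - by apply: ler_sum => j _; rewrite /= normrM ger0_norm.
  - exact: addr_ge0.
  rewrite ler_norml mulrDr; have := a_ge j; have := a_le j.
  have : 0 <= j%:R * c by rewrite mulr_ge0.
  have : 0 <= j%:R * c' by rewrite mulr_ge0.
  move=> *; apply/andP; split; lra.
split => //; apply: limr_le => //; apply: nearW => m.
exact: weighted_le.
Qed.

Lemma step_size_bound (R : realType) (a L l gamma eta : R) :
  0 < a -> 0 < L -> eta * L = gamma * a `^ (2 / 3) ->
  a^-1 * (L / 2 * (3 * eta * l) ^+ 2) <= 5 * l ^+ 2 * gamma ^+ 2 / L * a `^ (1 / 3).
Proof.
move=> a_gt0 L_gt0 etaL; set r := a `^ (1 / 3).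
have r_gt0 : 0 < r by rewrite powR_gt0.
have aE : a = r ^+ 3.
  rewrite -powR_mulrn ?ltW // -powRrM (_ : 1 / 3 * 3%:R = 1) ?powRr1 ?ltW //.
  by rewrite mul1r mulVf // pnatr_eq0.
have etaE : eta = gamma * r ^+ 2 / L.
  have a23 : a `^ (2 / 3) = r ^+ 2.
    by rewrite -powR_mulrn ?ltW // -powRrM; congr (_ `^ _); field.
  by rewrite -a23 -etaL mulfK ?gt_eqF.
have -> : a^-1 * (L / 2 * (3 * eta * l) ^+ 2) = 9 / 2 * (l ^+ 2 * gamma ^+ 2 / L * r).
  by rewrite aE etaE; field; rewrite !gt_eqF.
rewrite (_ : 5 * _ * _ / L * r = 5 * (l ^+ 2 * gamma ^+ 2 / L * r)); last by rewrite !mulrA.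
apply: ler_wpM2r; last by lra.
apply: mulr_ge0 (ltW r_gt0).
by apply: divr_ge0 (ltW L_gt0); apply: mulr_ge0; apply: sqr_ge0.
Qed.

Unset Implicit Arguments.

Theorem lemma14 (R : realType) (d n b : nat)
  (F : 'I_n -> 'rV[R]_d -> R) (G : 'I_n -> 'rV[R]_d -> 'rV[R]_d)
  (L l gamma eta : R) (x0 : 'rV[R]_d) :
  (forall z, is_gradient (F z) (G z)) ->
  0 < L ->
  (forall z x y, enorm (G z x - G z y) <= L * enorm (x - y)) ->
  (forall z x, enorm (G z x) <= l) ->
  (1 <= b)%N -> (8 * b <= n)%N ->
  0 < gamma -> gamma <= 3^-1 ->
  eta * L = gamma * (b%:R / n%:R) `^ (2 / 3) ->
  cvgn (series (scsg_term b F G eta x0)) /\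
  limn (series (scsg_term b F G eta x0))
    <= 5 * l ^+ 2 * gamma ^+ 2 / L * (b%:R / n%:R) `^ (1 / 3).
Proof.
move=> F_grad L_gt0 G_lip G_bound b_gt0 n_ge8b gamma_gt0 _ etaL.
have bn : (b <= n)%N by apply: leq_trans n_ge8b; rewrite leq_pmull.
have a_gt0 : 0 < b%:R / n%:R :> R by rewrite divr_gt0 ?ltr0n // (leq_trans b_gt0).
have eta_ge0 : 0 <= eta.
  rewrite -(mulfK (lt0r_neq0 L_gt0) eta) etaL divr_ge0 ?mulr_ge0 ?powR_ge0 //; exact: ltW.
set p : R := b%:R / (n + b)%:R; set q : R := n%:R / (n + b)%:R.
have nb_gt0 : 0 < (n + b)%:R :> R by rewrite ltr0n addn_gt0 b_gt0 orbT.
have pq : p + q = 1 by rewrite -mulrDl -natrD addnC divff ?gt_eqF.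
have p_gt0 : 0 < p by rewrite divr_gt0 // ltr0n.
have q_ge0 : 0 <= q by rewrite divr_ge0 ?ler0n ?ltW.
have qp : q / p = (b%:R / n%:R)^-1 by rewrite /p /q invf_div mulrA divfK ?gt_eqF // invf_div.
have hi_ge0 : 0 <= L / 2 * (3 * eta * l) ^+ 2 by rewrite mulr_ge0 ?sqr_ge0 ?divr_ge0 ?ltW.
have lo_ge0 : 0 <= 3 * eta * l ^+ 2 by rewrite mulr_ge0 ?sqr_ge0 // mulr_ge0.
have [u_cvg u_le] := geometric_series_le pq p_gt0 q_ge0 hi_ge0 lo_ge0
  (cond_exp_step_ge bn (step_drift_ge x0 F_grad G_bound b_gt0 bn eta_ge0))
  (cond_exp_step_le bn (step_drift_le x0 F_grad (ltW L_gt0) G_lip G_bound b_gt0 bn eta_ge0)).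
split => //; apply: le_trans u_le _; rewrite qp.
exact: step_size_bound.
Qed.
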